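(* Let $\mu$ be a probability distribution on $Q_d$ and let $X\in Q_d$ with $|X|=k\ge1$ and $P_1(X,\mathbf 0)>\frac12$. Let $I=\{i: x_i=1\}$. Then there exists $i\in I$ with \[ w_i^0<\begin{cases}\frac34-\frac1{4k} & \text{if $k$ is odd},\\[2pt] \frac34-\frac1{2k} & \text{if $k$ is even}.\end{cases} \]
   Context: $Q_d=\{0,1\}^d$ with the Hamming distance $d(X,Y)=|\{i: x_i\neq y_i\}|$; $|X|$ is the number of coordinates of $X$ equal to $1$. A probability distribution on $Q_d$ is a function $\mu:Q_d\to\mathbb R_{\ge0}$ with $\sum_{V\in Q_d}\mu(V)=1$, extended to subsets by $\mu(\mathcal A)=\sum_{V\in\mathcal A}\mu(V)$. For $A,B\in Q_d$ let $V(A,B)=\{Z\in Q_d: d(Z,A)<d(Z,B)\}$ and $T(A,B)=\{Z\in Q_d: d(Z,A)=d(Z,B)\}$, and $P_1(A,B)=\mu(V(A,B))+\frac12\mu(T(A,B))$. For $i\in[d]$, $w_i^0=\mu(\{Z\in Q_d: z_i=0\})$. $\mathbf 0=(0,\dots,0)$. *)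

From mathcomp Require Import all_boot all_order all_algebra.
Set Implicit Arguments. Unset Strict Implicit. Unset Printing Implicit Defensive.
Import Order.TTheory GRing.Theory Num.Theory.
Local Open Scope ring_scope.

(* The hypercube Q_d = {0,1}^d, points as finite functions 'I_d -> bool
   (true = 1, false = 0). *)
Definition cube (d : nat) := {ffun 'I_d -> bool}.

Definition hdist d (X Y : cube d) : nat := #|[set i : 'I_d | X i != Y i]|.

Definition weight d (X : cube d) : nat := #|[set i : 'I_d | X i]|.

Definition zero_pt d : cube d := [ffun _ => false].

Definition is_distr (R : numDomainType) d (mu : cube d -> R) : Prop :=
  (forall V, 0 <= mu V) /\ \sum_(V : cube d) mu V = 1.

Definition muS (R : numDomainType) d (mu : cube d -> R) (A : {set cube d}) : R :=
  \sum_(V in A) mu V.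

Definition Vor d (A B : cube d) : {set cube d} :=
  [set Z : cube d | (hdist Z A < hdist Z B)%N].
Definition Tie d (A B : cube d) : {set cube d} :=
  [set Z : cube d | hdist Z A == hdist Z B].

Definition P1 (R : numFieldType) d (mu : cube d -> R) (A B : cube d) : R :=
  muS mu (Vor A B) + 2^-1 * muS mu (Tie A B).

Definition w0 (R : numDomainType) d (mu : cube d -> R) (i : 'I_d) : R :=
  muS mu [set Z : cube d | ~~ Z i].

(* Let m(Z) be the number of coordinates of I that are 1 in Z.  Then
   2 m(Z) = d(Z,0) + k - d(Z,X), so 2 m(Z) > k whenever Z is strictly closer
   to X than to 0, and 2 m(Z) = k on ties.  Since 2 m(Z) is even, this gives
   m(Z) >= c/2 on V(X,0) and m(Z) >= c/4 on T(X,0), where c is the least even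
   number exceeding k.  Hence E[m] >= (c/2) P_1(X,0) > c/4.  But
   E[m] = sum_(i in I) (1 - w_i^0), so some i in I has 1 - w_i^0 > c/(4k),
   which is the claimed bound. *)

From mathcomp Require Import all_boot all_order all_algebra.
From mathcomp Require Import zify ring lra.

Set Implicit Arguments.
Unset Strict Implicit.
Unset Printing Implicit Defensive.
Import Order.TTheory GRing.Theory Num.Theory.
Local Open Scope ring_scope.

Definition overlap d (X Z : cube d) : nat := #|[set i | X i && Z i]|.

Definition next_even (k : nat) : nat := if odd k then k.+1 else k.+2.

Lemma card_set_sum_nat (T : finType) (P : pred T) :
  #|[set x | P x]| = (\sum_x (P x : nat))%N.
Proof.
by rewrite -sum1dep_card big_mkcond /=; apply: eq_bigr => x _; case: (P x).
Qed.

Lemma hdist_overlap d (X Z : cube d) :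
  (hdist Z X + 2 * overlap X Z = hdist Z (zero_pt d) + weight X)%N.
Proof.
rewrite /hdist /overlap /weight !card_set_sum_nat big_distrr -!big_split /=.
by apply: eq_bigr => i _; rewrite ffunE; case: (X i); case: (Z i).
Qed.

Section OverlapBounds.

Variables (d k : nat) (X Z : cube d).
Hypothesis weightX : weight X = k.

Lemma next_even_le_overlap_Vor :
  Z \in Vor X (zero_pt d) -> (next_even k <= 2 * overlap X Z)%N.
Proof.
rewrite inE => closer; have := hdist_overlap X Z; rewrite weightX /next_even.
have := odd_double_half k; rewrite -muln2; case: (odd k) => /=; lia.
Qed.

Lemma next_even_le_overlap_Tie :
  (1 <= k)%N -> Z \in Tie X (zero_pt d) -> (next_even k <= 4 * overlap X Z)%N.
Proof.
move=> k_gt0; rewrite inE => /eqP tie.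
have := hdist_overlap X Z; rewrite weightX /next_even.
have := odd_double_half k; rewrite -muln2; case: (odd k) => /=; lia.
Qed.

End OverlapBounds.

Section Expectation.

Variables (R : numDomainType) (d : nat) (mu : cube d -> R).

Lemma muS_indicator (A : {set cube d}) :
  muS mu A = \sum_Z mu Z * (Z \in A)%:R.
Proof.
by rewrite /muS big_mkcond /=; apply: eq_bigr => Z _; case: (Z \in A);
  rewrite ?mulr1 ?mulr0.
Qed.

Lemma expected_coord (i : 'I_d) :
  \sum_Z mu Z = 1 -> \sum_Z mu Z * (Z i : nat)%:R = 1 - w0 mu i.
Proof.
move=> mu1; rewrite -[in RHS]mu1 /w0 muS_indicator -sumrB; apply: eq_bigr => Z _.
by rewrite inE; case: (Z i); rewrite ?mulr1 ?mulr0 ?subr0 ?subrr.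
Qed.

Lemma expected_overlap (X : cube d) : \sum_Z mu Z = 1 ->
  \sum_Z mu Z * (overlap X Z)%:R = \sum_(i | X i) (1 - w0 mu i).
Proof.
move=> mu1; under eq_bigr => Z _.
  rewrite /overlap card_set_sum_nat natr_sum mulr_sumr (bigID X) /=.
  rewrite [X in _ + X]big1 => [|i /negbTE ->]; last by rewrite mulr0.
  rewrite addr0; over.
by rewrite exchange_big; apply: eq_bigr => i Xi /=; rewrite -expected_coord //;
  apply: eq_bigr => Z _; rewrite Xi.
Qed.

End Expectation.

Section OverlapLowerBound.

Variables (R : realFieldType) (d : nat) (mu : cube d -> R).

Lemma overlap_ge_Vor_Tie (k : nat) (X Z : cube d) :
  weight X = k -> (1 <= k)%N ->
  (next_even k)%:R / 2 * ((Z \in Vor X (zero_pt d))%:R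
                          + 2^-1 * (Z \in Tie X (zero_pt d))%:R)
  <= (overlap X Z)%:R :> R.
Proof.
move=> wX k_gt0; case VorZ: (Z \in _).
  have -> : (Z \in Tie X (zero_pt d)) = false.
    by move: VorZ; rewrite !inE => /ltn_eqF ->.
  move: (next_even_le_overlap_Vor wX VorZ); rewrite -(ler_nat R) natrM.
  rewrite mulr0 addr0 mulr1; lra.
case TieZ: (Z \in _); last by rewrite mulr0 addr0 mulr0.
move: (next_even_le_overlap_Tie wX k_gt0 TieZ); rewrite -(ler_nat R) natrM.
rewrite add0r mulr1; lra.
Qed.

Lemma P1_le_expected_overlap (k : nat) (X : cube d) :
  (forall Z, 0 <= mu Z) -> weight X = k -> (1 <= k)%N ->
  (next_even k)%:R / 2 * P1 mu X (zero_pt d) <= \sum_Z mu Z * (overlap X Z)%:R.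
Proof.
move=> mu_ge0 wX k_gt0.
rewrite /P1 !muS_indicator mulr_sumr -big_split mulr_sumr; apply: ler_sum => Z _ /=.
have := ler_wpM2l (mu_ge0 Z) (overlap_ge_Vor_Tie Z wX k_gt0); lra.
Qed.

End OverlapLowerBound.

Lemma exists_gt_of_sum_gt (R : realDomainType) (T : finType) (P : pred T)
    (F : T -> R) (t : R) :
  #|[set x | P x]|%:R * t < \sum_(x | P x) F x -> exists2 x, P x & t < F x.
Proof.
move=> sum_gt; apply/exists_inP; apply: contraLR sum_gt => /exists_inPn F_le.
rewrite -leNgt -sum1dep_card natr_sum mulr_suml.
by apply: ler_sum => x Px; rewrite mul1r leNgt F_le.
Qed.

Lemma next_even_threshold (R : numFieldType) (k : nat) : k%:R != 0 :> R ->
  1 - (next_even k)%:R / (4 * k%:R) =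
  (if odd k then 3/4 - 1/(4 * k%:R) else 3/4 - 1/(2 * k%:R)) :> R.
Proof.
move=> k_neq0; rewrite /next_even; case: (odd k).
- by rewrite -natr1; field.
- by rewrite -!natr1; field.
Qed.

Theorem mainTheorem3 (R : realFieldType) (d : nat) (mu : cube d -> R)
  (X : cube d) (k : nat) :
  is_distr mu ->
  weight X = k -> (1 <= k)%N ->
  P1 mu X (zero_pt d) > 2^-1 ->
  exists i : 'I_d, X i /\
    w0 mu i < (if odd k then 3/4 - 1/(4 * k%:R) else 3/4 - 1/(2 * k%:R)).
Proof.
move=> [mu_ge0 mu1] wX k_gt0 P1_gt.
have k_pos : 0 < k%:R :> R by rewrite ltr0n.
have c_pos : 0 < (next_even k)%:R :> R by rewrite ltr0n /next_even; case: odd.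
have [i Xi gt_i] : exists2 i, X i & (next_even k)%:R / (4 * k%:R) < 1 - w0 mu i.
  apply: exists_gt_of_sum_gt; rewrite -/(weight X) wX -expected_overlap //.
  apply: lt_le_trans (P1_le_expected_overlap mu_ge0 wX k_gt0).
  have -> : k%:R * ((next_even k)%:R / (4 * k%:R)) = (next_even k)%:R / 4 :> R.
    by field; rewrite gt_eqF.
  have : 0 < (next_even k)%:R * (P1 mu X (zero_pt d) - 2^-1) by rewrite mulr_gt0 ?subr_gt0.
  lra.
exists i; split => //; rewrite -next_even_threshold ?gt_eqF //; lra.
Qed.
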